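(* Let $T_0$ and $T_0^+$ be the theories described in the context. Then: (1) If $M$ is a model of $T_0^+$, then $Q_0^M$, $Q_1^M$ and $Q_2^M$ are all non-empty, and $F_0^M$ and $F_3^M$ are onto (onto $Q_0^M$). (2) Every model $M$ of $T_0$ in which $Q_0^M\neq\emptyset$ and $Q_2^M\neq\emptyset$ and in which $F_0^M$ and $F_3^M$ are onto $Q_0^M$ can be extended to a model of $T_0^+$ with the same universe (i.e. by extending the partial functions); and every model of $T_0^+$ is a model of $T_0$. (3) There are models $M$ of $T_0$ with $Q_0^M\neq\emptyset$, $Q_2^M\neq\emptyset$ and $F_3^M$ onto $Q_0^M$ which cannot be extended to a model of $T_0^+$ with the same universe. (4) Every model of $T_0$ is a submodel of a model of $T_0^+$. (5) $T_0^+$ has the amalgamation property and the joint embedding property.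
   Context: The language consists of unary predicates $Q_0,Q_1,Q_2$ and function symbols $F_0,F_1,F_2,F_3$ ($F_1$ two-place, the others one-place), interpreted as possibly partial functions. $T_0$ is the (incomplete) theory saying: (i) $Q_0,Q_1,Q_2$ partition the universe; (ii) $F_0$ is a partial function from $Q_1$ to $Q_0$; (iii) $F_1$ is a partial two-place function from $Q_2\times Q_0$ to $Q_1$; (iv) $F_2$ is a partial function from $Q_0$ to $Q_2$; (v) $F_3$ is a partial function from $Q_2$ to $Q_0$; (vi) $F_0(F_1(z,x))=x$ for all $(z,x)$ in the domain of $F_1$; (vii) $F_3(F_2(x))=x$ for all $x$ (in the domain of $F_2$). $T_0^+$ is like $T_0$ but additionally requires $F_0,F_1,F_2,F_3$ to be total on $Q_1$, $Q_2\times Q_0$, $Q_0$, $Q_2$ respectively. Submodel convention: $M$ is a submodel of $N$ if $|M|\subseteq|N|$, $Q_i^M=Q_i^N\cap|M|$, and each partial function of $N$ extends the corresponding partial function of $M$ (the fact that a function is undefined at some argument in $M$ need not be preserved in $N$). *)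

Record Lstr (U : Type) : Type := mkLstr {
  Q0 : U -> Prop;
  Q1 : U -> Prop;
  Q2 : U -> Prop;
  F0 : U -> option U;
  F1 : U -> U -> option U;
  F2 : U -> option U;
  F3 : U -> option U
}.
Arguments Q0 {U} _ _.
Arguments Q1 {U} _ _.
Arguments Q2 {U} _ _.
Arguments F0 {U} _ _.
Arguments F1 {U} _ _ _.
Arguments F2 {U} _ _.
Arguments F3 {U} _ _.

(* M is a model of T0 (universes of structures are nonempty, as usual). *)
Definition T0 {U : Type} (M : Lstr U) : Prop :=
  inhabited U /\
  (forall x, (Q0 M x \/ Q1 M x \/ Q2 M x) /\
             ~ (Q0 M x /\ Q1 M x) /\ ~ (Q0 M x /\ Q2 M x) /\ ~ (Q1 M x /\ Q2 M x)) /\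
  (forall x y, F0 M x = Some y -> Q1 M x /\ Q0 M y) /\
  (forall z x y, F1 M z x = Some y -> Q2 M z /\ Q0 M x /\ Q1 M y) /\
  (forall x y, F2 M x = Some y -> Q0 M x /\ Q2 M y) /\
  (forall x y, F3 M x = Some y -> Q2 M x /\ Q0 M y) /\
  (forall z x y, F1 M z x = Some y -> F0 M y = Some x) /\
  (forall x y, F2 M x = Some y -> F3 M y = Some x).

Definition T0plus {U : Type} (M : Lstr U) : Prop :=
  T0 M /\
  (forall x, Q1 M x -> exists y, F0 M x = Some y) /\
  (forall z x, Q2 M z -> Q0 M x -> exists y, F1 M z x = Some y) /\
  (forall x, Q0 M x -> exists y, F2 M x = Some y) /\
  (forall x, Q2 M x -> exists y, F3 M x = Some y).

Definition onto_Q0 {U : Type} (M : Lstr U) (f : U -> option U) : Prop :=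
  forall x, Q0 M x -> exists y, f y = Some x.

Definition same_universe_extension {U : Type} (M N : Lstr U) : Prop :=
  (forall x, Q0 N x <-> Q0 M x) /\
  (forall x, Q1 N x <-> Q1 M x) /\
  (forall x, Q2 N x <-> Q2 M x) /\
  (forall x y, F0 M x = Some y -> F0 N x = Some y) /\
  (forall z x y, F1 M z x = Some y -> F1 N z x = Some y) /\
  (forall x y, F2 M x = Some y -> F2 N x = Some y) /\
  (forall x y, F3 M x = Some y -> F3 N x = Some y).

Definition embedding {U V : Type} (M : Lstr U) (N : Lstr V) (f : U -> V) : Prop :=
  (forall x y, f x = f y -> x = y) /\
  (forall x, Q0 M x <-> Q0 N (f x)) /\
  (forall x, Q1 M x <-> Q1 N (f x)) /\
  (forall x, Q2 M x <-> Q2 N (f x)) /\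
  (forall x y, F0 M x = Some y -> F0 N (f x) = Some (f y)) /\
  (forall z x y, F1 M z x = Some y -> F1 N (f z) (f x) = Some (f y)) /\
  (forall x y, F2 M x = Some y -> F2 N (f x) = Some (f y)) /\
  (forall x y, F3 M x = Some y -> F3 N (f x) = Some (f y)).

Definition T0plus_AP : Prop :=
  forall (A B C : Type) (MA : Lstr A) (MB : Lstr B) (MC : Lstr C)
         (f : A -> B) (g : A -> C),
    T0plus MA -> T0plus MB -> T0plus MC ->
    embedding MA MB f -> embedding MA MC g ->
    exists (D : Type) (MD : Lstr D) (h : B -> D) (k : C -> D),
      T0plus MD /\ embedding MB MD h /\ embedding MC MD k /\
      (forall a, h (f a) = k (g a)).

Definition T0plus_JEP : Prop :=
  forall (B C : Type) (MB : Lstr B) (MC : Lstr C),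
    T0plus MB -> T0plus MC ->
    exists (D : Type) (MD : Lstr D) (h : B -> D) (k : C -> D),
      T0plus MD /\ embedding MB MD h /\ embedding MC MD k.

From Stdlib Require Import ClassicalEpsilon FinFun.

(* In a model of T0^+ one reaches Q0 from any point, then Q2 by F2 and Q1 by F1,
   and axioms (vi), (vii) make F0 and F3 onto.  Conversely, ontoness of F0 and
   F3 is exactly what allows the missing values of F1 and F2 to be chosen
   compatibly with (vi) and (vii), so such a model of T0 completes on its own
   universe; with Q1 empty there is no room for F1, whence (3).  Any model of T0
   becomes one of the completable kind after adjoining a new point of Q0 and, for
   every point of the enlarged Q0, fresh preimages under F0 and F3.  For
   amalgamation, glue two models along the common image of the base: the base is
   closed under the total functions, so both structures agree on the overlap, the
   union is a model of T0, and the previous step completes it. *)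

Definition choice_fun {X Y : Type} (R : X -> Y -> Prop) (x : X) : option Y :=
  match excluded_middle_informative (exists y, R x y) with
  | left H => Some (proj1_sig (constructive_indefinite_description _ H))
  | right _ => None
  end.

Section ChoiceFun.
Context {X Y : Type} (R : X -> Y -> Prop).

Lemma choice_fun_sub x y : choice_fun R x = Some y -> R x y.
Proof.
  unfold choice_fun; destruct excluded_middle_informative as [H|]; [|discriminate].
  destruct constructive_indefinite_description as [y' Hy']; simpl.
  intros E; injection E as <-; exact Hy'.
Qed.

Lemma choice_fun_dom x : (exists y, R x y) -> exists y, choice_fun R x = Some y.
Proof.
  unfold choice_fun; destruct excluded_middle_informative; [eauto | contradiction].
Qed.

Lemma choice_fun_functional :
  (forall x y y', R x y -> R x y' -> y = y') ->
  forall x y, choice_fun R x = Some y <-> R x y.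
Proof.
  intros Hfun x y; split; [apply choice_fun_sub|].
  intros Hxy; destruct (choice_fun_dom x) as [y' Hy']; [eauto|].
  rewrite Hy'; f_equal; exact (Hfun _ _ _ (choice_fun_sub _ _ Hy') Hxy).
Qed.

End ChoiceFun.

Lemma extend_partial_fun {X Y : Type} (f : X -> option Y) (R : X -> Y -> Prop)
    (P : X -> Prop) :
  (forall x y, f x = Some y -> R x y) -> (forall x, P x -> exists y, R x y) ->
  exists g : X -> option Y,
    (forall x y, f x = Some y -> g x = Some y) /\
    (forall x, P x -> exists y, g x = Some y) /\
    (forall x y, g x = Some y -> R x y).
Proof.
  intros fR PR.
  set (R' := fun x y => f x = Some y \/ (f x = None /\ R x y)).
  exists (choice_fun R'); split; [|split].
  - intros x y E; destruct (choice_fun_dom R' x) as [y' Hy']; [exists y; left; exact E|].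
    rewrite Hy'; destruct (choice_fun_sub R' _ _ Hy') as [E'|[E' _]]; congruence.
  - intros x Px; apply choice_fun_dom; unfold R'.
    destruct (f x) as [y|] eqn:E; [eauto|].
    destruct (PR x Px) as [y Hy]; eauto.
  - intros x y E; destruct (choice_fun_sub R' _ _ E) as [E'|[_ Hy]]; auto.
Qed.

Definition image_graph {X Y X' Y' : Type} (i : X -> X') (j : Y -> Y')
    (F : X -> option Y) (x' : X') (y' : Y') : Prop :=
  exists x y, x' = i x /\ F x = Some y /\ y' = j y.

Lemma image_graph_union_functional {X1 X2 X Y1 Y2 Y : Type}
    (i1 : X1 -> X) (i2 : X2 -> X) (j1 : Y1 -> Y) (j2 : Y2 -> Y)
    (F1 : X1 -> option Y1) (F2 : X2 -> option Y2) :
  Injective i1 -> Injective i2 ->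
  (forall x1 x2 y1 y2, i1 x1 = i2 x2 -> F1 x1 = Some y1 -> F2 x2 = Some y2 -> j1 y1 = j2 y2) ->
  forall x y y',
    image_graph i1 j1 F1 x y \/ image_graph i2 j2 F2 x y ->
    image_graph i1 j1 F1 x y' \/ image_graph i2 j2 F2 x y' -> y = y'.
Proof.
  intros Hi1 Hi2 compat x y y'
    [[p [u [-> [E ->]]]]|[q [u [-> [E ->]]]]] [[p' [u' [Ex [E' ->]]]]|[q' [u' [Ex [E' ->]]]]].
  - apply Hi1 in Ex; subst; congruence.
  - exact (compat _ _ _ _ Ex E E').
  - symmetry; exact (compat _ _ _ _ (eq_sym Ex) E' E).
  - apply Hi2 in Ex; subst; congruence.
Qed.

Definition sorts_partition {U : Type} (M : Lstr U) : Prop :=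
  forall x, (Q0 M x \/ Q1 M x \/ Q2 M x) /\
    ~ (Q0 M x /\ Q1 M x) /\ ~ (Q0 M x /\ Q2 M x) /\ ~ (Q1 M x /\ Q2 M x).

(* [T0plus M] unfolds to [T0 M /\ total M]. *)
Definition total {U : Type} (M : Lstr U) : Prop :=
  (forall x, Q1 M x -> exists y, F0 M x = Some y) /\
  (forall z x, Q2 M z -> Q0 M x -> exists y, F1 M z x = Some y) /\
  (forall x, Q0 M x -> exists y, F2 M x = Some y) /\
  (forall x, Q2 M x -> exists y, F3 M x = Some y).

Section T0Facts.
Context {U : Type} (M : Lstr U).

Lemma T0_intro :
  inhabited U -> sorts_partition M ->
  (forall x y, F0 M x = Some y -> Q1 M x /\ Q0 M y) ->
  (forall z x y, F1 M z x = Some y -> Q2 M z /\ Q0 M x /\ Q1 M y /\ F0 M y = Some x) ->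
  (forall x y, F2 M x = Some y -> Q0 M x /\ Q2 M y /\ F3 M y = Some x) ->
  (forall x y, F3 M x = Some y -> Q2 M x /\ Q0 M y) ->
  T0 M.
Proof.
  intros inh part e0 e1 e2 e3.
  split; [exact inh|]; split; [exact part|]; split; [exact e0|].
  split; [intros z x y E; destruct (e1 _ _ _ E) as [? [? [? _]]]; auto|].
  split; [intros x y E; destruct (e2 _ _ E) as [? [? _]]; auto|].
  split; [exact e3|].
  split; [intros z x y E; apply (e1 _ _ _ E) | intros x y E; apply (e2 _ _ E)].
Qed.

Hypothesis HM : T0 M.

Lemma T0_inhabited : inhabited U.
Proof. exact (proj1 HM). Qed.

Lemma T0_partition : sorts_partition M.
Proof. exact (proj1 (proj2 HM)). Qed.

Lemma T0_F0 x y : F0 M x = Some y -> Q1 M x /\ Q0 M y.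
Proof. apply HM. Qed.

Lemma T0_F1 z x y :
  F1 M z x = Some y -> Q2 M z /\ Q0 M x /\ Q1 M y /\ F0 M y = Some x.
Proof.
  destruct HM as [_ [_ [_ [e1 [_ [_ [e6 _]]]]]]].
  intros E; pose proof (e6 _ _ _ E); destruct (e1 _ _ _ E) as [? []]; auto.
Qed.

Lemma T0_F2 x y : F2 M x = Some y -> Q0 M x /\ Q2 M y /\ F3 M y = Some x.
Proof.
  destruct HM as [_ [_ [_ [_ [e2 [_ [_ e7]]]]]]].
  intros E; pose proof (e7 _ _ E); destruct (e2 _ _ E); auto.
Qed.

Lemma T0_F3 x y : F3 M x = Some y -> Q2 M x /\ Q0 M y.
Proof. apply HM. Qed.

End T0Facts.

Lemma T0plus_nonempty_sorts {U : Type} (M : Lstr U) :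
  T0plus M -> (exists x, Q0 M x) /\ (exists x, Q1 M x) /\ (exists x, Q2 M x).
Proof.
  intros [HM [tot0 [tot1 [tot2 tot3]]]].
  assert (HQ0 : exists x, Q0 M x).
  { destruct (T0_inhabited M HM) as [u].
    destruct (T0_partition M HM u) as [[Hu|[Hu|Hu]] _]; [eauto| |].
    - destruct (tot0 u Hu) as [y Hy]; exists y; exact (proj2 (T0_F0 M HM _ _ Hy)).
    - destruct (tot3 u Hu) as [y Hy]; exists y; exact (proj2 (T0_F3 M HM _ _ Hy)). }
  destruct HQ0 as [a Ha]; destruct (tot2 a Ha) as [z Hz].
  destruct (T0_F2 M HM _ _ Hz) as [_ [Qz _]]; destruct (tot1 z a Qz Ha) as [y Hy].
  destruct (T0_F1 M HM _ _ _ Hy) as [_ [_ [Qy _]]].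
  split; [|split]; eauto.
Qed.

Lemma T0plus_onto {U : Type} (M : Lstr U) :
  T0plus M -> onto_Q0 M (F0 M) /\ onto_Q0 M (F3 M).
Proof.
  intros HT; destruct (T0plus_nonempty_sorts M HT) as [_ [_ [z Hz]]].
  destruct HT as [HM [_ [tot1 [tot2 _]]]]; split; intros x Hx.
  - destruct (tot1 z x Hz Hx) as [y Hy]; exists y; apply (T0_F1 M HM _ _ _ Hy).
  - destruct (tot2 x Hx) as [y Hy]; exists y; apply (T0_F2 M HM _ _ Hy).
Qed.

Lemma T0_completion {U : Type} (M : Lstr U) :
  T0 M -> (exists x, Q0 M x) -> onto_Q0 M (F0 M) -> onto_Q0 M (F3 M) ->
  exists N : Lstr U, T0plus N /\ same_universe_extension M N.
Proof.
  intros HM [a Ha] onto0 onto3.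
  destruct (extend_partial_fun (F0 M) (fun x y => Q1 M x /\ Q0 M y) (Q1 M))
    as [G0 [ext0 [tot0 sub0]]].
  { exact (T0_F0 M HM). }
  { eauto. }
  destruct (extend_partial_fun (uncurry (F1 M))
      (fun p y => Q2 M (fst p) /\ Q0 M (snd p) /\ F0 M y = Some (snd p))
      (fun p => Q2 M (fst p) /\ Q0 M (snd p)))
    as [G1 [ext1 [tot1 sub1]]].
  { intros [z x] y E; simpl; destruct (T0_F1 M HM _ _ _ E) as [? [? [_ ?]]]; auto. }
  { intros [z x] [Hz Hx]; destruct (onto0 x Hx) as [y Hy]; exists y; simpl; auto. }
  destruct (extend_partial_fun (F2 M) (fun x y => Q0 M x /\ F3 M y = Some x) (Q0 M))
    as [G2 [ext2 [tot2 sub2]]].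
  { intros x y E; destruct (T0_F2 M HM _ _ E) as [? [_ ?]]; auto. }
  { intros x Hx; destruct (onto3 x Hx) as [y Hy]; exists y; auto. }
  destruct (extend_partial_fun (F3 M) (fun x y => Q2 M x /\ Q0 M y) (Q2 M))
    as [G3 [ext3 [tot3 sub3]]].
  { exact (T0_F3 M HM). }
  { eauto. }
  exists (mkLstr U (Q0 M) (Q1 M) (Q2 M) G0 (fun z x => G1 (z, x)) G2 G3).
  split; [split; [apply T0_intro; simpl|]|].
  - exact (T0_inhabited M HM).
  - exact (T0_partition M HM).
  - exact sub0.
  - intros z x y E; destruct (sub1 _ _ E) as [Qz [Qx E0]].
    split; [exact Qz|]; split; [exact Qx|].
    split; [exact (proj1 (T0_F0 M HM _ _ E0)) | exact (ext0 _ _ E0)].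
  - intros x y E; destruct (sub2 _ _ E) as [Qx E3].
    split; [exact Qx|].
    split; [exact (proj1 (T0_F3 M HM _ _ E3)) | exact (ext3 _ _ E3)].
  - exact sub3.
  - split; [exact tot0|]; split; [|split; [exact tot2 | exact tot3]].
    intros z x Qz Qx; exact (tot1 (z, x) (conj Qz Qx)).
  - repeat split; auto.
    intros z x y E; exact (ext1 (z, x) y E).
Qed.

Lemma exists_T0_not_completable :
  exists (U : Type) (M : Lstr U),
    T0 M /\ (exists x, Q0 M x) /\ (exists x, Q2 M x) /\ onto_Q0 M (F3 M) /\
    ~ (exists N : Lstr U, T0plus N /\ same_universe_extension M N).
Proof.
  exists bool, (mkLstr bool (fun b => b = true) (fun _ => False) (fun b => b = false)
    (fun _ => None) (fun _ _ => None)
    (fun b => if b then Some false else None) (fun b => if b then None else Some true)).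
  split; [|split; [|split; [|split]]].
  - apply T0_intro; simpl.
    + exact (inhabits true).
    + intros [|]; simpl; intuition congruence.
    + discriminate.
    + discriminate.
    + intros [|] y E; inversion E; auto.
    + intros [|] y E; inversion E; auto.
  - exists true; reflexivity.
  - exists false; reflexivity.
  - intros x Hx; simpl in Hx; subst; exists false; reflexivity.
  - intros [N [[HN [_ [tot1 _]]] [SQ0 [SQ1 [SQ2 _]]]]].
    destruct (tot1 false true) as [y Hy]; [apply SQ2; reflexivity | apply SQ0; reflexivity|].
    apply (SQ1 y), (T0_F1 N HN _ _ _ Hy).
Qed.

Lemma embedding_comp {U V W : Type} (M : Lstr U) (N : Lstr V) (P : Lstr W)
    (e : U -> V) (e' : V -> W) :
  embedding M N e -> embedding N P e' -> embedding M P (fun x => e' (e x)).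
Proof.
  intros [i [q0 [q1 [q2 [f0 [f1 [f2 f3]]]]]]] [i' [q0' [q1' [q2' [f0' [f1' [f2' f3']]]]]]].
  split; [intros x y E; exact (i _ _ (i' _ _ E))|].
  split; [intros x; rewrite q0; apply q0'|].
  split; [intros x; rewrite q1; apply q1'|].
  split; [intros x; rewrite q2; apply q2'|].
  split; [intros x y E; exact (f0' _ _ (f0 _ _ E))|].
  split; [intros z x y E; exact (f1' _ _ _ (f1 _ _ _ E))|].
  split; [intros x y E; exact (f2' _ _ (f2 _ _ E)) | intros x y E; exact (f3' _ _ (f3 _ _ E))].
Qed.

Lemma embedding_same_universe_extension {U V : Type} (M : Lstr U) (N N' : Lstr V)
    (e : U -> V) :
  embedding M N e -> same_universe_extension N N' -> embedding M N' e.
Proof.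
  intros [i [q0 [q1 [q2 [f0 [f1 [f2 f3]]]]]]] [s0 [s1 [s2 [g0 [g1 [g2 g3]]]]]].
  split; [exact i|].
  split; [intros x; rewrite s0; apply q0|].
  split; [intros x; rewrite s1; apply q1|].
  split; [intros x; rewrite s2; apply q2|].
  split; [intros x y E; exact (g0 _ _ (f0 _ _ E))|].
  split; [intros z x y E; exact (g1 _ _ _ (f1 _ _ _ E))|].
  split; [intros x y E; exact (g2 _ _ (f2 _ _ E)) | intros x y E; exact (g3 _ _ (f3 _ _ E))].
Qed.

Lemma option_map_Some {X Y : Type} (e : X -> Y) (o : option X) (y : Y) :
  option_map e o = Some y -> exists x, o = Some x /\ y = e x.
Proof. destruct o; simpl; intros E; inversion E; eauto. Qed.

Section FreeExtension.
Context {U : Type} (M : Lstr U).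

Inductive ext_carrier : Type :=
  | ext_old (x : U)
  | ext_q0
  | ext_q1 (o : option {x | Q0 M x})
  | ext_q2 (o : option {x | Q0 M x}).

Definition q0_point (o : option {x | Q0 M x}) : ext_carrier :=
  match o with Some s => ext_old (proj1_sig s) | None => ext_q0 end.

Definition ext_str : Lstr ext_carrier := mkLstr ext_carrier
  (fun v => match v with ext_old x => Q0 M x | ext_q0 => True | _ => False end)
  (fun v => match v with ext_old x => Q1 M x | ext_q1 _ => True | _ => False end)
  (fun v => match v with ext_old x => Q2 M x | ext_q2 _ => True | _ => False end)
  (fun v => match v with
            | ext_old x => option_map ext_old (F0 M x)
            | ext_q1 o => Some (q0_point o)
            | _ => None end)
  (fun v w => match v, w with
              | ext_old z, ext_old x => option_map ext_old (F1 M z x)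
              | _, _ => None end)
  (fun v => match v with ext_old x => option_map ext_old (F2 M x) | _ => None end)
  (fun v => match v with
            | ext_old x => option_map ext_old (F3 M x)
            | ext_q2 o => Some (q0_point o)
            | _ => None end).

Lemma q0_point_Q0 o : Q0 ext_str (q0_point o).
Proof. destruct o as [[x Hx]|]; simpl; auto. Qed.

Lemma ext_str_Q0_points v : Q0 ext_str v -> exists o, v = q0_point o.
Proof.
  destruct v as [x| | |]; simpl; try contradiction.
  - intros Hx; exists (Some (exist _ x Hx)); reflexivity.
  - intros _; exists None; reflexivity.
Qed.

Lemma ext_old_embedding : embedding M ext_str ext_old.
Proof.
  split; [intros x y E; injection E; auto|].
  do 3 (split; [reflexivity|]).
  split; [intros x y E; simpl; rewrite E; reflexivity|].
  split; [intros z x y E; simpl; rewrite E; reflexivity|].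
  split; intros x y E; simpl; rewrite E; reflexivity.
Qed.

Hypothesis HM : T0 M.

Lemma ext_str_T0 : T0 ext_str.
Proof.
  apply T0_intro.
  - exact (inhabits ext_q0).
  - intros [x| | |]; simpl; [apply (T0_partition M HM) | tauto ..].
  - intros [x| |o|] y E; simpl in *; try discriminate.
    + destruct (option_map_Some _ _ _ E) as [y' [E' ->]]; exact (T0_F0 M HM _ _ E').
    + injection E as <-; exact (conj I (q0_point_Q0 o)).
  - intros [z| | |] [x| | |] y E; simpl in *; try discriminate.
    destruct (option_map_Some _ _ _ E) as [y' [E' ->]].
    destruct (T0_F1 M HM _ _ _ E') as [? [? [? E0]]]; simpl; rewrite E0; auto.
  - intros [x| | |] y E; simpl in *; try discriminate.
    destruct (option_map_Some _ _ _ E) as [y' [E' ->]].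
    destruct (T0_F2 M HM _ _ E') as [? [? E3]]; simpl; rewrite E3; auto.
  - intros [x| | |o] y E; simpl in *; try discriminate.
    + destruct (option_map_Some _ _ _ E) as [y' [E' ->]]; exact (T0_F3 M HM _ _ E').
    + injection E as <-; exact (conj I (q0_point_Q0 o)).
Qed.

Lemma T0_embeds_in_T0plus :
  exists (V : Type) (N : Lstr V) (e : U -> V), T0plus N /\ embedding M N e.
Proof.
  destruct (T0_completion ext_str ext_str_T0) as [N [HN HS]].
  - exists ext_q0; exact I.
  - intros v Hv; destruct (ext_str_Q0_points v Hv) as [o ->]; exists (ext_q1 o); reflexivity.
  - intros v Hv; destruct (ext_str_Q0_points v Hv) as [o ->]; exists (ext_q2 o); reflexivity.
  - exists ext_carrier, N, ext_old; split; [exact HN|].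
    exact (embedding_same_universe_extension _ _ _ _ ext_old_embedding HS).
Qed.

End FreeExtension.

Section EmbeddingEdges.
Context {U V : Type} (M : Lstr U) (N : Lstr V) (e : U -> V).
Hypotheses (HM : T0 M) (He : embedding M N e).

Lemma embedding_F0_edge x y : F0 M x = Some y -> Q1 N (e x) /\ Q0 N (e y).
Proof. destruct He as [_ [q0 [q1 _]]]; rewrite <- q0, <- q1; exact (T0_F0 M HM x y). Qed.

Lemma embedding_F1_edge z x y :
  F1 M z x = Some y -> Q2 N (e z) /\ Q0 N (e x) /\ Q1 N (e y) /\ F0 N (e y) = Some (e x).
Proof.
  destruct He as [_ [q0 [q1 [q2 [f0 _]]]]]; rewrite <- q0, <- q1, <- q2.
  intros E; destruct (T0_F1 M HM _ _ _ E) as [? [? [? E0]]]; auto.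
Qed.

Lemma embedding_F2_edge x y :
  F2 M x = Some y -> Q0 N (e x) /\ Q2 N (e y) /\ F3 N (e y) = Some (e x).
Proof.
  destruct He as [_ [q0 [_ [q2 [_ [_ [_ f3]]]]]]]; rewrite <- q0, <- q2.
  intros E; destruct (T0_F2 M HM _ _ E) as [? [? E3]]; auto.
Qed.

Lemma embedding_F3_edge x y : F3 M x = Some y -> Q2 N (e x) /\ Q0 N (e y).
Proof. destruct He as [_ [q0 [_ [q2 _]]]]; rewrite <- q0, <- q2; exact (T0_F3 M HM x y). Qed.

End EmbeddingEdges.

Definition pair_map {X Y : Type} (i : X -> Y) (p : X * X) : Y * Y := (i (fst p), i (snd p)).

Lemma pair_map_injective {X Y : Type} (i : X -> Y) : Injective i -> Injective (pair_map i).
Proof. intros Hi [x1 x2] [x1' x2'] E; injection E as E1 E2; f_equal; auto. Qed.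

Section Gluing.
Context {A B C D : Type} (MA : Lstr A) (MB : Lstr B) (MC : Lstr C)
  (f : A -> B) (g : A -> C) (h : B -> D) (k : C -> D).
Hypotheses (HB : T0 MB) (HC : T0 MC) (HA : total MA)
  (Ef : embedding MA MB f) (Eg : embedding MA MC g) (Hh : Injective h) (Hk : Injective k)
  (overlap : forall b c, h b = k c <-> exists a, b = f a /\ c = g a).

Lemma overlap_sorts b c : h b = k c -> (Q1 MB b <-> Q1 MC c) /\ (Q2 MB b <-> Q2 MC c).
Proof.
  intros E; apply overlap in E as [a [-> ->]].
  destruct Ef as [_ [_ [fq1 [fq2 _]]]]; destruct Eg as [_ [_ [gq1 [gq2 _]]]].
  rewrite <- fq1, <- fq2, <- gq1, <- gq2; tauto.
Qed.

Lemma overlap_F0 b c y0 y1 :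
  h b = k c -> F0 MB b = Some y0 -> F0 MC c = Some y1 -> h y0 = k y1.
Proof.
  intros E; apply overlap in E as [a [-> ->]]; intros E0 E1.
  destruct Ef as [_ [_ [fq1 [_ [f0 _]]]]]; destruct Eg as [_ [_ [_ [_ [g0 _]]]]].
  destruct (proj1 HA a) as [z Hz]; [apply fq1, (T0_F0 MB HB _ _ E0)|].
  rewrite (f0 _ _ Hz) in E0; rewrite (g0 _ _ Hz) in E1.
  injection E0 as <-; injection E1 as <-; apply overlap; eauto.
Qed.

Lemma overlap_F1 p q y0 y1 :
  pair_map h p = pair_map k q ->
  uncurry (F1 MB) p = Some y0 -> uncurry (F1 MC) q = Some y1 -> h y0 = k y1.
Proof.
  destruct p as [b1 b2], q as [c1 c2]; intros E; injection E as E1 E2; simpl.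
  apply overlap in E1 as [a1 [-> ->]]; apply overlap in E2 as [a2 [-> ->]]; intros E0 E1.
  destruct Ef as [_ [fq0 [_ [fq2 [_ [f1 _]]]]]]; destruct Eg as [_ [_ [_ [_ [_ [g1 _]]]]]].
  destruct (T0_F1 MB HB _ _ _ E0) as [Q2a [Q0a _]].
  destruct (proj1 (proj2 HA) a1 a2) as [z Hz]; [apply fq2, Q2a | apply fq0, Q0a|].
  rewrite (f1 _ _ _ Hz) in E0; rewrite (g1 _ _ _ Hz) in E1.
  injection E0 as <-; injection E1 as <-; apply overlap; eauto.
Qed.

Lemma overlap_F2 b c y0 y1 :
  h b = k c -> F2 MB b = Some y0 -> F2 MC c = Some y1 -> h y0 = k y1.
Proof.
  intros E; apply overlap in E as [a [-> ->]]; intros E0 E1.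
  destruct Ef as [_ [fq0 [_ [_ [_ [_ [f2 _]]]]]]]; destruct Eg as [_ [_ [_ [_ [_ [_ [g2 _]]]]]]].
  destruct (proj1 (proj2 (proj2 HA)) a) as [z Hz]; [apply fq0, (T0_F2 MB HB _ _ E0)|].
  rewrite (f2 _ _ Hz) in E0; rewrite (g2 _ _ Hz) in E1.
  injection E0 as <-; injection E1 as <-; apply overlap; eauto.
Qed.

Lemma overlap_F3 b c y0 y1 :
  h b = k c -> F3 MB b = Some y0 -> F3 MC c = Some y1 -> h y0 = k y1.
Proof.
  intros E; apply overlap in E as [a [-> ->]]; intros E0 E1.
  destruct Ef as [_ [_ [_ [fq2 [_ [_ [_ f3]]]]]]]; destruct Eg as [_ [_ [_ [_ [_ [_ [_ g3]]]]]]].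
  destruct (proj2 (proj2 (proj2 HA)) a) as [z Hz]; [apply fq2, (T0_F3 MB HB _ _ E0)|].
  rewrite (f3 _ _ Hz) in E0; rewrite (g3 _ _ Hz) in E1.
  injection E0 as <-; injection E1 as <-; apply overlap; eauto.
Qed.

Definition glued_sort (PB : B -> Prop) (PC : C -> Prop) (d : D) : Prop :=
  (exists b, d = h b /\ PB b) \/ (exists c, d = k c /\ PC c).

Definition glued_fun (FB : B -> option B) (FC : C -> option C) : D -> option D :=
  choice_fun (fun d e => image_graph h h FB d e \/ image_graph k k FC d e).

Definition glued_fun2 (FB : B -> B -> option B) (FC : C -> C -> option C) :
    D -> D -> option D :=
  fun d1 d2 => choice_fun (fun p e => image_graph (pair_map h) h (uncurry FB) p e \/
                                      image_graph (pair_map k) k (uncurry FC) p e) (d1, d2).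

(* Points of [D] outside both images land in [Q0], where no function is defined. *)
Definition glued : Lstr D := mkLstr D
  (fun d => ~ glued_sort (Q1 MB) (Q1 MC) d /\ ~ glued_sort (Q2 MB) (Q2 MC) d)
  (glued_sort (Q1 MB) (Q1 MC)) (glued_sort (Q2 MB) (Q2 MC))
  (glued_fun (F0 MB) (F0 MC)) (glued_fun2 (F1 MB) (F1 MC))
  (glued_fun (F2 MB) (F2 MC)) (glued_fun (F3 MB) (F3 MC)).

Section GluedSort.
Variables (PB : B -> Prop) (PC : C -> Prop).
Hypothesis agree : forall b c, h b = k c -> (PB b <-> PC c).

Lemma glued_sort_left b : glued_sort PB PC (h b) <-> PB b.
Proof.
  split; [intros [[b' [E Hb]]|[c [E Hc]]] | left; eauto].
  - apply Hh in E; subst; exact Hb.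
  - apply (agree _ _ E), Hc.
Qed.

Lemma glued_sort_right c : glued_sort PB PC (k c) <-> PC c.
Proof.
  split; [intros [[b [E Hb]]|[c' [E Hc]]] | right; eauto].
  - apply (agree _ _ (eq_sym E)), Hb.
  - apply Hk in E; subst; exact Hc.
Qed.

End GluedSort.

Lemma glued_fun_spec (FB : B -> option B) (FC : C -> option C) :
  (forall b c y0 y1, h b = k c -> FB b = Some y0 -> FC c = Some y1 -> h y0 = k y1) ->
  forall d e, glued_fun FB FC d = Some e <-> image_graph h h FB d e \/ image_graph k k FC d e.
Proof. intros compat; apply choice_fun_functional, image_graph_union_functional; auto. Qed.

Lemma glued_fun2_spec (FB : B -> B -> option B) (FC : C -> C -> option C) :
  (forall p q y0 y1, pair_map h p = pair_map k q ->
     uncurry FB p = Some y0 -> uncurry FC q = Some y1 -> h y0 = k y1) ->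
  forall d1 d2 e, glued_fun2 FB FC d1 d2 = Some e <->
    image_graph (pair_map h) h (uncurry FB) (d1, d2) e \/
    image_graph (pair_map k) k (uncurry FC) (d1, d2) e.
Proof.
  intros compat d1 d2; apply choice_fun_functional, image_graph_union_functional;
    auto using pair_map_injective.
Qed.

Lemma glued_embedding_left : embedding MB glued h.
Proof.
  pose proof (glued_sort_left _ _ (fun b c E => proj1 (overlap_sorts b c E))) as q1.
  pose proof (glued_sort_left _ _ (fun b c E => proj2 (overlap_sorts b c E))) as q2.
  split; [exact Hh|].
  split; [intros b; simpl; rewrite q1, q2; destruct (T0_partition MB HB b); tauto|].
  split; [intros b; symmetry; apply q1|].
  split; [intros b; symmetry; apply q2|].
  split; [intros b y E; apply (glued_fun_spec _ _ overlap_F0); left; exists b, y; auto|].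
  split; [intros z x y E; apply (glued_fun2_spec _ _ overlap_F1); left; exists (z, x), y; auto|].
  split; [intros b y E; apply (glued_fun_spec _ _ overlap_F2) | intros b y E;
          apply (glued_fun_spec _ _ overlap_F3)]; left; exists b, y; auto.
Qed.

Lemma glued_embedding_right : embedding MC glued k.
Proof.
  pose proof (glued_sort_right _ _ (fun b c E => proj1 (overlap_sorts b c E))) as q1.
  pose proof (glued_sort_right _ _ (fun b c E => proj2 (overlap_sorts b c E))) as q2.
  split; [exact Hk|].
  split; [intros c; simpl; rewrite q1, q2; destruct (T0_partition MC HC c); tauto|].
  split; [intros c; symmetry; apply q1|].
  split; [intros c; symmetry; apply q2|].
  split; [intros c y E; apply (glued_fun_spec _ _ overlap_F0); right; exists c, y; auto|].
  split; [intros z x y E; apply (glued_fun2_spec _ _ overlap_F1); right; exists (z, x), y; auto|].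
  split; [intros c y E; apply (glued_fun_spec _ _ overlap_F2) | intros c y E;
          apply (glued_fun_spec _ _ overlap_F3)]; right; exists c, y; auto.
Qed.

Lemma glued_T0 : T0 glued.
Proof.
  pose proof glued_embedding_left as EB; pose proof glued_embedding_right as EC.
  destruct EB as [_ [_ [b1 [b2 _]]]], EC as [_ [_ [c1 [c2 _]]]].
  apply T0_intro.
  - destruct (T0_inhabited MB HB) as [b]; exact (inhabits (h b)).
  - intros d; simpl.
    assert (~ (glued_sort (Q1 MB) (Q1 MC) d /\ glued_sort (Q2 MB) (Q2 MC) d)).
    { intros [[[b [-> Hb]]|[c [-> Hc]]] H2].
      - apply b2 in H2; destruct (T0_partition MB HB b); tauto.
      - apply c2 in H2; destruct (T0_partition MC HC c); tauto. }
    destruct (classic (glued_sort (Q1 MB) (Q1 MC) d)),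
             (classic (glued_sort (Q2 MB) (Q2 MC) d)); tauto.
  - intros d e E; apply (glued_fun_spec _ _ overlap_F0) in E
      as [[b [y [-> [E ->]]]]|[c [y [-> [E ->]]]]].
    + exact (embedding_F0_edge _ _ _ HB glued_embedding_left _ _ E).
    + exact (embedding_F0_edge _ _ _ HC glued_embedding_right _ _ E).
  - intros d1 d2 e E; apply (glued_fun2_spec _ _ overlap_F1) in E
      as [[[z x] [y [Ed [E ->]]]]|[[z x] [y [Ed [E ->]]]]];
      injection Ed as -> ->.
    + exact (embedding_F1_edge _ _ _ HB glued_embedding_left _ _ _ E).
    + exact (embedding_F1_edge _ _ _ HC glued_embedding_right _ _ _ E).
  - intros d e E; apply (glued_fun_spec _ _ overlap_F2) in E
      as [[b [y [-> [E ->]]]]|[c [y [-> [E ->]]]]].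
    + exact (embedding_F2_edge _ _ _ HB glued_embedding_left _ _ E).
    + exact (embedding_F2_edge _ _ _ HC glued_embedding_right _ _ E).
  - intros d e E; apply (glued_fun_spec _ _ overlap_F3) in E
      as [[b [y [-> [E ->]]]]|[c [y [-> [E ->]]]]].
    + exact (embedding_F3_edge _ _ _ HB glued_embedding_left _ _ E).
    + exact (embedding_F3_edge _ _ _ HC glued_embedding_right _ _ E).
Qed.

Lemma T0_gluing : exists MD : Lstr D, T0 MD /\ embedding MB MD h /\ embedding MC MD k.
Proof. exists glued; auto using glued_T0, glued_embedding_left, glued_embedding_right. Qed.

End Gluing.

Section PushoutMap.
Context {A B C : Type} (f : A -> B) (g : A -> C).

Definition pushout_map (c : C) : B + C :=
  match excluded_middle_informative (exists a, g a = c) with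
  | left H => inl (f (proj1_sig (constructive_indefinite_description _ H)))
  | right _ => inr c
  end.

Lemma pushout_map_spec c :
  (exists a, g a = c /\ pushout_map c = inl (f a)) \/
  ((~ exists a, g a = c) /\ pushout_map c = inr c).
Proof.
  unfold pushout_map; destruct excluded_middle_informative as [H|H]; [left | right; auto].
  destruct constructive_indefinite_description as [a Ha]; eauto.
Qed.

Lemma pushout_map_image : Injective g -> forall a, pushout_map (g a) = inl (f a).
Proof.
  intros Hg a; destruct (pushout_map_spec (g a)) as [[a' [E ->]]|[N _]].
  - apply Hg in E; subst; reflexivity.
  - exfalso; eauto.
Qed.

Lemma pushout_map_injective : Injective f -> Injective pushout_map.
Proof.
  intros Hf c c' E.
  destruct (pushout_map_spec c) as [[a [<- Ea]]|[_ Ec]],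
           (pushout_map_spec c') as [[a' [<- Ea']]|[_ Ec']];
    rewrite ?Ea, ?Ea', ?Ec, ?Ec' in E; try discriminate; injection E as E.
  - f_equal; exact (Hf _ _ E).
  - exact E.
Qed.

Lemma pushout_map_overlap :
  Injective g -> forall b c, inl b = pushout_map c <-> exists a, b = f a /\ c = g a.
Proof.
  intros Hg b c; split.
  - destruct (pushout_map_spec c) as [[a [<- ->]]|[_ ->]]; [|discriminate].
    intros E; injection E as ->; eauto.
  - intros [a [-> ->]]; symmetry; apply pushout_map_image, Hg.
Qed.

End PushoutMap.

Lemma T0plus_amalgamation : T0plus_AP.
Proof.
  intros A B C MA MB MC f g HA HB HC Ef Eg.
  assert (Hf : Injective f) by exact (proj1 Ef).
  assert (Hg : Injective g) by exact (proj1 Eg).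
  destruct (T0_gluing MA MB MC f g inl (pushout_map f g) (proj1 HB) (proj1 HC) (proj2 HA)
              Ef Eg) as [MD [HD [Eh Ek]]].
  - intros b b' E; injection E; auto.
  - apply pushout_map_injective, Hf.
  - apply pushout_map_overlap, Hg.
  - destruct (T0_embeds_in_T0plus MD HD) as [E [ME [e [HE Ee]]]].
    exists E, ME, (fun b => e (inl b)), (fun c => e (pushout_map f g c)).
    split; [exact HE|].
    split; [exact (embedding_comp _ _ _ _ _ Eh Ee)|].
    split; [exact (embedding_comp _ _ _ _ _ Ek Ee)|].
    intros a; rewrite (pushout_map_image f g Hg); reflexivity.
Qed.

Definition empty_str : Lstr Empty_set := mkLstr Empty_set
  (fun _ => False) (fun _ => False) (fun _ => False)
  (fun _ => None) (fun _ _ => None) (fun _ => None) (fun _ => None).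

Lemma empty_str_total : total empty_str.
Proof. unfold total; repeat split; intros []. Qed.

Lemma empty_str_embedding {U : Type} (M : Lstr U) :
  embedding empty_str M (Empty_set_rect (fun _ => U)).
Proof. repeat split; intros; match goal with x : Empty_set |- _ => destruct x end. Qed.

(* Joint embedding is amalgamation over the empty structure: it is not a model
   (universes are nonempty), but gluing only needs the base to be total. *)
Lemma T0plus_joint_embedding : T0plus_JEP.
Proof.
  intros B C MB MC HB HC.
  destruct (T0_gluing empty_str MB MC _ _ inl inr (proj1 HB) (proj1 HC) empty_str_total
              (empty_str_embedding MB) (empty_str_embedding MC)) as [MD [HD [Eh Ek]]].
  - intros b b' E; injection E; auto.
  - intros c c' E; injection E; auto.
  - intros b c; split; [discriminate | intros [[] _]].
  - destruct (T0_embeds_in_T0plus MD HD) as [E [ME [e [HE Ee]]]].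
    exists E, ME, (fun b => e (inl b)), (fun c => e (inr c)).
    split; [exact HE|].
    split; [exact (embedding_comp _ _ _ _ _ Eh Ee) | exact (embedding_comp _ _ _ _ _ Ek Ee)].
Qed.

Theorem claim2p4 :
  (* (1) *)
  (forall (U : Type) (M : Lstr U), T0plus M ->
     (exists x, Q0 M x) /\ (exists x, Q1 M x) /\ (exists x, Q2 M x) /\
     onto_Q0 M (F0 M) /\ onto_Q0 M (F3 M)) /\
  (* (2) *)
  ((forall (U : Type) (M : Lstr U),
      T0 M -> (exists x, Q0 M x) -> (exists x, Q2 M x) ->
      onto_Q0 M (F0 M) -> onto_Q0 M (F3 M) ->
      exists N : Lstr U, T0plus N /\ same_universe_extension M N) /\
   (forall (U : Type) (M : Lstr U), T0plus M -> T0 M)) /\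
  (* (3) *)
  (exists (U : Type) (M : Lstr U),
      T0 M /\ (exists x, Q0 M x) /\ (exists x, Q2 M x) /\ onto_Q0 M (F3 M) /\
      ~ (exists N : Lstr U, T0plus N /\ same_universe_extension M N)) /\
  (* (4) *)
  (forall (U : Type) (M : Lstr U), T0 M ->
     exists (V : Type) (N : Lstr V) (f : U -> V), T0plus N /\ embedding M N f) /\
  (* (5) *)
  (T0plus_AP /\ T0plus_JEP).
Proof.
  split.
  - intros U M HT; destruct (T0plus_nonempty_sorts M HT) as [? [? ?]].
    destruct (T0plus_onto M HT); auto.
  - split; [split|].
    + intros U M HM HQ0 _; exact (T0_completion M HM HQ0).
    + intros U M HT; exact (proj1 HT).
    + split; [exact exists_T0_not_completable|].
      split; [exact @T0_embeds_in_T0plus|].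
      exact (conj T0plus_amalgamation T0plus_joint_embedding).
Qed.
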